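(* Let $-\infty\le a<b\le\infty$, let $f,g$ be differentiable on $(a,b)$ with $g'\neq0$ and $g>0$ on $(a,b)$, and let $H_{f,g}=\frac{f'}{g'}g-f$. Assume $f'/g'$ is strictly monotone on $(a,b)$ (so that $H_{f,g}(a^+)=\lim_{x\to a^+}H_{f,g}(x)$ and $H_{f,g}(b^-)=\lim_{x\to b^-}H_{f,g}(x)$ exist in $[-\infty,\infty]$). (i) If $g'>0$ (resp. $g'<0$) on $(a,b)$, then $(f/g)'>0$ (resp. $(f/g)'<0$) on all of $(a,b)$ if and only if $\min(H_{f,g}(a^+),H_{f,g}(b^-))\ge 0$. (ii) If $g'>0$ (resp. $g'<0$) on $(a,b)$, then $(f/g)'<0$ (resp. $(f/g)'>0$) on all of $(a,b)$ if and only if $\max(H_{f,g}(a^+),H_{f,g}(b^-))\le 0$. (iii) If $f'/g'$ is strictly increasing on $(a,b)$, $H_{f,g}(a^+)<0$ and $H_{f,g}(b^-)>0$, then there is a unique $x_0\in(a,b)$ such that, when $g'>0$, $(f/g)'<0$ on $(a,x_0)$ and $(f/g)'>0$ on $(x_0,b)$; and when $g'<0$, $(f/g)'>0$ on $(a,x_0)$ and $(f/g)'<0$ on $(x_0,b)$. (iv) If $f'/g'$ is strictly decreasing on $(a,b)$, $H_{f,g}(a^+)>0$ and $H_{f,g}(b^-)<0$, then there is a unique $x_0\in(a,b)$ such that, when $g'>0$, $(f/g)'>0$ on $(a,x_0)$ and $(f/g)'<0$ on $(x_0,b)$; and when $g'<0$, $(f/g)'<0$ on $(a,x_0)$ and $(f/g)'>0$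 on $(x_0,b)$.
   Context: For differentiable $f,g$ on $(a,b)$ with $g'\ne 0$ there, $H_{f,g}(x)=\frac{f'(x)}{g'(x)}g(x)-f(x)$; $H_{f,g}(a^+)$, $H_{f,g}(b^-)$ denote its one-sided limits at the endpoints (possibly infinite). *)

From Stdlib Require Import Reals Lra.
Open Scope R_scope.

Inductive ER : Type :=
| Fin : R -> ER
| PInf : ER
| MInf : ER.

Definition ER_lt (x y : ER) : Prop :=
  match x, y with
  | Fin a, Fin b => a < b
  | MInf, Fin _ | MInf, PInf | Fin _, PInf => True
  | _, _ => False
  end.

Definition ER_le (x y : ER) : Prop :=
  match x, y with
  | Fin a, Fin b => a <= b
  | MInf, _ | _, PInf => True
  | _, _ => False
  end.

Definition in_oi (a b : ER) (x : R) : Prop := ER_lt a (Fin x) /\ ER_lt (Fin x) b.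

Definition near_left (a b : ER) (P : R -> Prop) : Prop :=
  exists c : R, in_oi a b c /\ forall x, ER_lt a (Fin x) -> x < c -> P x.

Definition near_right (a b : ER) (P : R -> Prop) : Prop :=
  exists c : R, in_oi a b c /\ forall x, c < x -> ER_lt (Fin x) b -> P x.

Definition lim_along (near : (R -> Prop) -> Prop) (h : R -> R) (L : ER) : Prop :=
  match L with
  | Fin l => forall eps, 0 < eps -> near (fun x => Rabs (h x - l) < eps)
  | PInf => forall M, near (fun x => M < h x)
  | MInf => forall M, near (fun x => h x < M)
  end.

Definition lim_a_plus (a b : ER) (h : R -> R) (L : ER) : Prop := lim_along (near_left a b) h L.
Definition lim_b_minus (a b : ER) (h : R -> R) (L : ER) : Prop := lim_along (near_right a b) h L.

Definition H_fg (f g f' g' : R -> R) (x : R) : R := f' x / g' x * g x - f x.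

Definition quot_deriv_pos (f g : R -> R) (x : R) : Prop :=
  exists l, derivable_pt_lim (fun t => f t / g t) x l /\ 0 < l.
Definition quot_deriv_neg (f g : R -> R) (x : R) : Prop :=
  exists l, derivable_pt_lim (fun t => f t / g t) x l /\ l < 0.

Definition strict_incr_on (a b : ER) (r : R -> R) : Prop :=
  forall x y, in_oi a b x -> in_oi a b y -> x < y -> r x < r y.
Definition strict_decr_on (a b : ER) (r : R -> R) : Prop :=
  forall x y, in_oi a b x -> in_oi a b y -> x < y -> r y < r x.

(* Write r = f'/g'. Since (f/g)' = g' H_{f,g} / g^2, the sign of (f/g)' is that of g' H_{f,g}.
   By the Cauchy mean value theorem f(y) - f(x) = r(c) (g(y) - g(x)) for some c in (x,y), so
     H_{f,g}(y) - H_{f,g}(x) = (r(y) - r(c)) g(y) + (r(c) - r(x)) g(x),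
   and since g > 0 the function H_{f,g} is strictly monotone in the same sense as r.  A strictly
   monotone function lies strictly between its one-sided limits at the endpoints, which decides
   its sign in (i) and (ii).  In (iii) and (iv) it changes sign exactly once, at the supremum of
   the set where it is negative (resp. positive); no continuity of H_{f,g} is needed for this. *)

From Stdlib Require Import Reals Lra Classical.
Open Scope R_scope.

Lemma ER_lt_Fin_le_trans a x y : ER_lt a (Fin x) -> x <= y -> ER_lt a (Fin y).
Proof. destruct a; simpl; intros; auto; lra. Qed.

Lemma ER_Fin_le_lt_trans b x y : x <= y -> ER_lt (Fin y) b -> ER_lt (Fin x) b.
Proof. destruct b; simpl; intros; auto; lra. Qed.

Lemma ER_le_Fin_lt_trans L v w : ER_le L (Fin v) -> v < w -> ER_lt L (Fin w).
Proof. destruct L; simpl; auto; lra. Qed.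

Lemma ER_Fin_lt_le_trans L v w : v < w -> ER_le (Fin w) L -> ER_lt (Fin v) L.
Proof. destruct L; simpl; auto; lra. Qed.

Lemma ER_Fin_le_lt_Fin L v w : ER_le (Fin v) L -> ER_lt L (Fin w) -> v < w.
Proof. destruct L; simpl; intros; try contradiction; lra. Qed.

Lemma ER_Fin_lt_le_Fin L v w : ER_lt (Fin v) L -> ER_le L (Fin w) -> v < w.
Proof. destruct L; simpl; intros; try contradiction; lra. Qed.

Definition ER_opp (x : ER) : ER :=
  match x with
  | Fin r => Fin (- r)
  | PInf => MInf
  | MInf => PInf
  end.

Lemma ER_lt_opp x y : ER_lt (ER_opp x) (ER_opp y) <-> ER_lt y x.
Proof. destruct x, y; simpl; split; auto; lra. Qed.

Lemma ER_le_opp x y : ER_le (ER_opp x) (ER_opp y) <-> ER_le y x.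
Proof. destruct x, y; simpl; split; auto; lra. Qed.

Lemma in_oi_nonempty a b : ER_lt a b -> exists x, in_oi a b x.
Proof.
  destruct a as [a0| |], b as [b0| |]; simpl; intros Hab; try contradiction.
  - exists ((a0 + b0) / 2); split; simpl; lra.
  - exists (a0 + 1); split; simpl; auto; lra.
  - exists (b0 - 1); split; simpl; auto; lra.
  - exists 0; split; simpl; auto.
Qed.

Lemma in_oi_between a b x y z : in_oi a b x -> in_oi a b y -> x <= z <= y -> in_oi a b z.
Proof.
  intros [Hax _] [_ Hyb] Hz.
  split; [apply ER_lt_Fin_le_trans with x | apply ER_Fin_le_lt_trans with y]; auto; lra.
Qed.

Lemma in_oi_left_of a b x0 x : in_oi a b x0 -> ER_lt a (Fin x) -> x < x0 -> in_oi a b x.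
Proof. intros [_ Hx0b] Hax Hx; split; auto; apply ER_Fin_le_lt_trans with x0; auto; lra. Qed.

Lemma in_oi_right_of a b x0 x : in_oi a b x0 -> x0 < x -> ER_lt (Fin x) b -> in_oi a b x.
Proof. intros [Hax0 _] Hx Hxb; split; auto; apply ER_lt_Fin_le_trans with x0; auto; lra. Qed.

Definition proper_filter (near : (R -> Prop) -> Prop) : Prop :=
  (forall P Q : R -> Prop, (forall x, P x -> Q x) -> near P -> near Q) /\
  (forall P Q : R -> Prop, near P -> near Q -> near (fun x => P x /\ Q x)) /\
  ~ near (fun _ => False).

Section ProperFilter.
Variable near : (R -> Prop) -> Prop.
Hypothesis near_proper : proper_filter near.

Lemma near_mono (P Q : R -> Prop) : (forall x, P x -> Q x) -> near P -> near Q.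
Proof. apply near_proper. Qed.

Lemma near_and (P Q : R -> Prop) : near P -> near Q -> near (fun x => P x /\ Q x).
Proof. apply near_proper. Qed.

Lemma near_witness (P : R -> Prop) : near P -> exists x, P x.
Proof.
  intros HP; apply NNPP; intros Hno.
  apply (proj2 (proj2 near_proper)), (near_mono P); auto.
  intros x Px; apply Hno; exists x; exact Px.
Qed.

Lemma lim_along_opp h L : lim_along near h L -> lim_along near (fun x => - h x) (ER_opp L).
Proof.
  destruct L as [l| |]; simpl; intros HL.
  - intros e He; refine (near_mono _ _ _ (HL e He)); intros x Hx.
    replace (- h x - - l) with (- (h x - l)) by ring; rewrite Rabs_Ropp; exact Hx.
  - intros M; refine (near_mono _ _ _ (HL (- M))); intros x Hx; simpl; lra.
  - intros M; refine (near_mono _ _ _ (HL (- M))); intros x Hx; simpl; lra.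
Qed.

Lemma lim_along_le h L v :
  lim_along near h L -> near (fun x => h x <= v) -> ER_le L (Fin v).
Proof.
  intros HL Hv; destruct L as [l| |]; simpl in *; auto.
  - destruct (Rle_dec l v) as [|Hlv]; auto; exfalso.
    destruct (near_witness _ (near_and _ _ (HL (l - v) ltac:(lra)) Hv)) as [x [Hx Hxv]].
    apply Rabs_def2 in Hx; lra.
  - destruct (near_witness _ (near_and _ _ (HL v) Hv)) as [x [Hx Hxv]]; lra.
Qed.

Lemma lim_along_ge h L v :
  lim_along near h L -> near (fun x => v <= h x) -> ER_le (Fin v) L.
Proof.
  intros HL Hv; apply ER_le_opp.
  apply (lim_along_le (fun x => - h x)); [now apply lim_along_opp|].
  refine (near_mono _ _ _ Hv); intros x Hx; simpl; lra.
Qed.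

Lemma lim_along_lt_near h L v :
  lim_along near h L -> ER_lt L (Fin v) -> near (fun x => h x < v).
Proof.
  intros HL; destruct L as [l| |]; simpl; intros HLv; try contradiction.
  - refine (near_mono _ _ _ (HL (v - l) ltac:(lra))); intros x Hx.
    apply Rabs_def2 in Hx; lra.
  - apply HL.
Qed.

Lemma lim_along_gt_near h L v :
  lim_along near h L -> ER_lt (Fin v) L -> near (fun x => v < h x).
Proof.
  intros HL HLv.
  refine (near_mono _ _ _ (lim_along_lt_near (fun x => - h x) (ER_opp L) (- v)
           (lim_along_opp h L HL) (proj2 (ER_lt_opp L (Fin v)) HLv))).
  intros x Hx; lra.
Qed.

End ProperFilter.

Lemma near_left_proper a b : proper_filter (near_left a b).
Proof.
  split; [|split].
  - intros P Q PQ [c [Hc HP]]; exists c; split; auto.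
  - intros P Q [c1 [Hc1 HP]] [c2 [Hc2 HQ]]; exists (Rmin c1 c2); split.
    + apply Rmin_case; auto.
    + intros x Hax Hx; pose proof (Rmin_l c1 c2); pose proof (Rmin_r c1 c2).
      split; [apply HP | apply HQ]; auto; lra.
  - intros [c [[Hac _] HF]]; destruct a as [a0| |]; simpl in Hac; try contradiction.
    + apply (HF ((a0 + c) / 2)); simpl; lra.
    + apply (HF (c - 1)); simpl; auto; lra.
Qed.

Lemma near_right_proper a b : proper_filter (near_right a b).
Proof.
  split; [|split].
  - intros P Q PQ [c [Hc HP]]; exists c; split; auto.
  - intros P Q [c1 [Hc1 HP]] [c2 [Hc2 HQ]]; exists (Rmax c1 c2); split.
    + apply Rmax_case; auto.
    + intros x Hx Hxb; pose proof (Rmax_l c1 c2); pose proof (Rmax_r c1 c2).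
      split; [apply HP | apply HQ]; auto; lra.
  - intros [c [[_ Hcb] HF]]; destruct b as [b0| |]; simpl in Hcb; try contradiction.
    + apply (HF ((b0 + c) / 2)); simpl; lra.
    + apply (HF (c + 1)); simpl; auto; lra.
Qed.

Lemma near_left_in a b P : near_left a b P -> near_left a b (fun x => in_oi a b x /\ P x).
Proof.
  intros [c [Hc HP]]; exists c; split; auto.
  intros x Hax Hxc; split; auto; apply (in_oi_left_of a b c); auto.
Qed.

Lemma near_left_below a b y : in_oi a b y -> near_left a b (fun x => in_oi a b x /\ x < y).
Proof. intros Hy; exists y; split; auto; intros x Hax Hxy; split; auto; now apply (in_oi_left_of a b y). Qed.

Lemma near_left_forall a b (P : R -> Prop) :
  ER_lt a b -> (forall x, in_oi a b x -> P x) -> near_left a b P.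
Proof.
  intros Hab HP; destruct (in_oi_nonempty a b Hab) as [y Hy].
  exists y; split; auto; intros x Hax Hxy; apply HP, (in_oi_left_of a b y); auto.
Qed.

Lemma near_right_forall a b (P : R -> Prop) :
  ER_lt a b -> (forall x, in_oi a b x -> P x) -> near_right a b P.
Proof.
  intros Hab HP; destruct (in_oi_nonempty a b Hab) as [y Hy].
  exists y; split; auto; intros x Hyx Hxb; apply HP, (in_oi_right_of a b y); auto.
Qed.

Lemma near_right_above a b y : in_oi a b y -> near_right a b (fun x => in_oi a b x /\ y < x).
Proof. intros Hy; exists y; split; auto; intros x Hyx Hxb; split; auto; now apply (in_oi_right_of a b y). Qed.

Lemma strict_decr_opp a b h : strict_decr_on a b h -> strict_incr_on a b (fun x => - h x).
Proof. intros Hh x y Hx Hy Hxy; specialize (Hh x y Hx Hy Hxy); lra. Qed.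

Lemma strict_incr_lim_a_plus_lt a b h LA x :
  strict_incr_on a b h -> lim_a_plus a b h LA -> in_oi a b x -> ER_lt LA (Fin (h x)).
Proof.
  intros Hh HA Hx.
  destruct (near_witness _ (near_left_proper a b) _ (near_left_below a b x Hx)) as [y [Hy Hyx]].
  apply ER_le_Fin_lt_trans with (h y); [|now apply Hh].
  apply (lim_along_le _ (near_left_proper a b) h); auto.
  refine (near_mono _ (near_left_proper a b) _ _ _ (near_left_below a b y Hy)).
  intros z [Hz Hzy]; left; now apply Hh.
Qed.

Lemma strict_incr_lim_b_minus_gt a b h LB x :
  strict_incr_on a b h -> lim_b_minus a b h LB -> in_oi a b x -> ER_lt (Fin (h x)) LB.
Proof.
  intros Hh HB Hx.
  destruct (near_witness _ (near_right_proper a b) _ (near_right_above a b x Hx)) as [y [Hy Hxy]].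
  apply ER_Fin_lt_le_trans with (h y); [now apply Hh|].
  apply (lim_along_ge _ (near_right_proper a b) h); auto.
  refine (near_mono _ (near_right_proper a b) _ _ _ (near_right_above a b y Hy)).
  intros z [Hz Hyz]; left; now apply Hh.
Qed.

Lemma strict_decr_lim_a_plus_gt a b h LA x :
  strict_decr_on a b h -> lim_a_plus a b h LA -> in_oi a b x -> ER_lt (Fin (h x)) LA.
Proof.
  intros Hh HA Hx; apply ER_lt_opp.
  apply (strict_incr_lim_a_plus_lt a b (fun x => - h x)); auto; [now apply strict_decr_opp|].
  now apply lim_along_opp; [apply near_left_proper|].
Qed.

Lemma strict_decr_lim_b_minus_lt a b h LB x :
  strict_decr_on a b h -> lim_b_minus a b h LB -> in_oi a b x -> ER_lt LB (Fin (h x)).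
Proof.
  intros Hh HB Hx; apply ER_lt_opp.
  apply (strict_incr_lim_b_minus_gt a b (fun x => - h x)); auto; [now apply strict_decr_opp|].
  now apply lim_along_opp; [apply near_right_proper|].
Qed.

Section StrictlyMonotoneSign.
Variables (a b : ER) (h : R -> R) (LA LB : ER).
Hypothesis ab_nonempty : ER_lt a b.
Hypothesis h_mono : strict_incr_on a b h \/ strict_decr_on a b h.
Hypothesis h_lim_a : lim_a_plus a b h LA.
Hypothesis h_lim_b : lim_b_minus a b h LB.

Lemma strict_mono_pos_iff :
  (forall x, in_oi a b x -> 0 < h x) <-> ER_le (Fin 0) LA /\ ER_le (Fin 0) LB.
Proof.
  split.
  - intros Hpos; split.
    + apply (lim_along_ge _ (near_left_proper a b) h); auto.
      apply near_left_forall; auto; intros x Hx; left; auto.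
    + apply (lim_along_ge _ (near_right_proper a b) h); auto.
      apply near_right_forall; auto; intros x Hx; left; auto.
  - intros [HA HB] x Hx; destruct h_mono as [Hh | Hh].
    + exact (ER_Fin_le_lt_Fin LA 0 (h x) HA (strict_incr_lim_a_plus_lt a b h LA x Hh h_lim_a Hx)).
    + exact (ER_Fin_le_lt_Fin LB 0 (h x) HB (strict_decr_lim_b_minus_lt a b h LB x Hh h_lim_b Hx)).
Qed.

Lemma strict_mono_neg_iff :
  (forall x, in_oi a b x -> h x < 0) <-> ER_le LA (Fin 0) /\ ER_le LB (Fin 0).
Proof.
  split.
  - intros Hneg; split.
    + apply (lim_along_le _ (near_left_proper a b) h); auto.
      apply near_left_forall; auto; intros x Hx; left; auto.
    + apply (lim_along_le _ (near_right_proper a b) h); auto.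
      apply near_right_forall; auto; intros x Hx; left; auto.
  - intros [HA HB] x Hx; destruct h_mono as [Hh | Hh].
    + exact (ER_Fin_lt_le_Fin LB (h x) 0 (strict_incr_lim_b_minus_gt a b h LB x Hh h_lim_b Hx) HB).
    + exact (ER_Fin_lt_le_Fin LA (h x) 0 (strict_decr_lim_a_plus_gt a b h LA x Hh h_lim_a Hx) HA).
Qed.
End StrictlyMonotoneSign.

Definition sign_change_at (a b : ER) (P Q : R -> Prop) (x0 : R) : Prop :=
  in_oi a b x0 /\
  (forall x, ER_lt a (Fin x) -> x < x0 -> P x) /\
  (forall x, x0 < x -> ER_lt (Fin x) b -> Q x).

Lemma sign_change_at_iff a b (P Q P' Q' : R -> Prop) x0 :
  (forall x, in_oi a b x -> (P x <-> P' x)) -> (forall x, in_oi a b x -> (Q x <-> Q' x)) ->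
  sign_change_at a b P Q x0 <-> sign_change_at a b P' Q' x0.
Proof.
  intros EP EQ; split; intros [Hx0 [HP HQ]]; split; auto; split; intros x H1 H2;
    [apply EP | apply EQ | apply EP | apply EQ]; auto;
    solve [apply (in_oi_left_of a b x0); auto | apply (in_oi_right_of a b x0); auto].
Qed.

Lemma sign_change_at_unique a b (P Q : R -> Prop) x0 x1 :
  (forall x, in_oi a b x -> P x -> Q x -> False) ->
  sign_change_at a b P Q x0 -> sign_change_at a b P Q x1 -> x0 = x1.
Proof.
  intros Hdisj H0 H1.
  assert (Hnlt : forall u v, sign_change_at a b P Q u -> sign_change_at a b P Q v -> ~ u < v).
  { intros u v [Hu [_ HQ]] [Hv [HP _]] Huv.
    assert (Hz : in_oi a b ((u + v) / 2)) by (apply (in_oi_between a b u v); auto; lra).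
    apply (Hdisj _ Hz); [apply HP | apply HQ]; try apply Hz; lra. }
  destruct (Rtotal_order x0 x1) as [H | [H | H]]; auto; exfalso.
  - exact (Hnlt x0 x1 H0 H1 H).
  - exact (Hnlt x1 x0 H1 H0 H).
Qed.

Lemma strict_incr_sign_change_exists a b h :
  strict_incr_on a b h -> near_left a b (fun x => h x < 0) -> near_right a b (fun x => 0 < h x) ->
  exists x0, sign_change_at a b (fun x => h x < 0) (fun x => 0 < h x) x0.
Proof.
  intros Hh Hneg [c [Hc Hpos]].
  set (E := fun x => in_oi a b x /\ h x < 0).
  assert (Hc_ub : is_upper_bound E c).
  { intros x [[_ Hxb] Hx]; apply Rnot_lt_le; intros Hcx; specialize (Hpos x Hcx Hxb); lra. }
  destruct (near_witness _ (near_left_proper a b) _ (near_left_in a b _ Hneg)) as [z Hz].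
  destruct (completeness E (ex_intro _ c Hc_ub) (ex_intro _ z Hz)) as [m [Hm_ub Hm_lub]].
  assert (Hm : in_oi a b m).
  { apply (in_oi_between a b z c); [apply Hz | exact Hc | split; [apply Hm_ub, Hz | apply Hm_lub, Hc_ub]]. }
  exists m; split; [exact Hm | split].
  - intros x Hax Hxm; assert (Hx : in_oi a b x) by (apply (in_oi_left_of a b m); auto).
    destruct (classic (exists y, E y /\ x < y)) as [[y [[Hy Hhy] Hxy]] | Hno].
    + specialize (Hh x y Hx Hy Hxy); lra.
    + enough (m <= x) by lra.
      apply Hm_lub; intros y Ey; apply Rnot_lt_le; intros Hxy; apply Hno; eauto.
  - intros x Hmx Hxb; assert (Hx : in_oi a b x) by (apply (in_oi_right_of a b m); auto).
    assert (Hw : in_oi a b ((m + x) / 2)) by (apply (in_oi_between a b m x); auto; lra).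
    assert (Hhw : 0 <= h ((m + x) / 2)).
    { apply Rnot_lt_le; intros Hhw.
      assert ((m + x) / 2 <= m) by (apply Hm_ub; split; auto). lra. }
    specialize (Hh _ x Hw Hx ltac:(lra)); lra.
Qed.

Lemma ex_unique_iff (A : Type) (P Q : A -> Prop) :
  (forall x, P x <-> Q x) -> (exists! x, P x) -> exists! x, Q x.
Proof. intros E [x [Px U]]; exists x; split; [now apply E | intros y Qy; now apply U, E]. Qed.

Lemma strict_incr_sign_change a b h LA LB :
  strict_incr_on a b h -> lim_a_plus a b h LA -> lim_b_minus a b h LB ->
  ER_lt LA (Fin 0) -> ER_lt (Fin 0) LB ->
  exists! x0, sign_change_at a b (fun x => h x < 0) (fun x => 0 < h x) x0.
Proof.
  intros Hh HA HB HLA HLB.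
  destruct (strict_incr_sign_change_exists a b h Hh) as [x0 Hx0].
  - exact (lim_along_lt_near _ (near_left_proper a b) h LA 0 HA HLA).
  - exact (lim_along_gt_near _ (near_right_proper a b) h LB 0 HB HLB).
  - exists x0; split; auto; intros x1 Hx1.
    apply (sign_change_at_unique a b (fun x => h x < 0) (fun x => 0 < h x)); auto.
    intros x _ H1 H2; lra.
Qed.

Lemma strict_decr_sign_change a b h LA LB :
  strict_decr_on a b h -> lim_a_plus a b h LA -> lim_b_minus a b h LB ->
  ER_lt (Fin 0) LA -> ER_lt LB (Fin 0) ->
  exists! x0, sign_change_at a b (fun x => 0 < h x) (fun x => h x < 0) x0.
Proof.
  intros Hh HA HB HLA HLB.
  apply (ex_unique_iff _ (sign_change_at a b (fun x => - h x < 0) (fun x => 0 < - h x))).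
  { intros x0; apply sign_change_at_iff; intros x _; split; lra. }
  apply (strict_incr_sign_change a b _ (ER_opp LA) (ER_opp LB)).
  - now apply strict_decr_opp.
  - now apply lim_along_opp; [apply near_left_proper|].
  - now apply lim_along_opp; [apply near_right_proper|].
  - destruct LA; simpl in *; auto; lra.
  - destruct LB; simpl in *; auto; lra.
Qed.

Lemma ex_derivable_pt_lim_iff (F : R -> R) x l (P : R -> Prop) :
  derivable_pt_lim F x l -> (exists l', derivable_pt_lim F x l' /\ P l') <-> P l.
Proof.
  intros HF; split; [intros [l' [Hl' Pl']] | intros Pl; now exists l].
  now rewrite (uniqueness_limite F x l l').
Qed.

Section QuotientDerivative.
Variables (a b : ER) (f g f' g' : R -> R).
Hypothesis f_deriv : forall x, in_oi a b x -> derivable_pt_lim f x (f' x).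
Hypothesis g_deriv : forall x, in_oi a b x -> derivable_pt_lim g x (g' x).
Hypothesis g'_neq0 : forall x, in_oi a b x -> g' x <> 0.
Hypothesis g_pos : forall x, in_oi a b x -> 0 < g x.

Lemma cauchy_mean_value x y : in_oi a b x -> in_oi a b y -> x < y ->
  exists c, x < c < y /\ f y - f x = f' c / g' c * (g y - g x).
Proof.
  intros Hx Hy Hxy.
  destruct (MVT_cor2 (fun t => (g y - g x) * f t - (f y - f x) * g t)
              (fun t => (g y - g x) * f' t - (f y - f x) * g' t) x y Hxy) as [c [Hmvt Hc]].
  { intros c Hc; assert (Hc' : in_oi a b c) by (apply (in_oi_between a b x y); auto).
    apply (derivable_pt_lim_minus (mult_real_fct (g y - g x) f) (mult_real_fct (f y - f x) g));
      apply derivable_pt_lim_scal; auto. }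
  assert (Hc' : in_oi a b c) by (apply (in_oi_between a b x y); auto; lra).
  exists c; split; auto.
  assert (Hcross : (g y - g x) * f' c = (f y - f x) * g' c).
  { assert (Hz : ((g y - g x) * f' c - (f y - f x) * g' c) * (y - x) = 0) by lra.
    apply Rmult_integral in Hz; destruct Hz; lra. }
  pose proof (g'_neq0 c Hc').
  replace (f' c / g' c * (g y - g x)) with ((g y - g x) * f' c / g' c) by (field; auto).
  rewrite Hcross; field; auto.
Qed.

Lemma H_fg_sub x y : in_oi a b x -> in_oi a b y -> x < y ->
  exists c, x < c < y /\
    H_fg f g f' g' y - H_fg f g f' g' x =
      (f' y / g' y - f' c / g' c) * g y + (f' c / g' c - f' x / g' x) * g x.
Proof.
  intros Hx Hy Hxy; destruct (cauchy_mean_value x y Hx Hy Hxy) as [c [Hc Hmvt]].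
  exists c; split; auto; unfold H_fg; rewrite <- (Rplus_minus (f x) (f y)), Hmvt; ring.
Qed.

Lemma H_fg_strict_incr :
  strict_incr_on a b (fun x => f' x / g' x) -> strict_incr_on a b (H_fg f g f' g').
Proof.
  intros Hr x y Hx Hy Hxy; destruct (H_fg_sub x y Hx Hy Hxy) as [c [Hc Hdiff]].
  assert (Hc' : in_oi a b c) by (apply (in_oi_between a b x y); auto; lra).
  assert (0 < (f' y / g' y - f' c / g' c) * g y)
    by (apply Rmult_lt_0_compat; [apply Rlt_0_minus, Hr | apply g_pos]; auto; lra).
  assert (0 < (f' c / g' c - f' x / g' x) * g x)
    by (apply Rmult_lt_0_compat; [apply Rlt_0_minus, Hr | apply g_pos]; auto; lra).
  lra.
Qed.

Lemma H_fg_strict_decr :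
  strict_decr_on a b (fun x => f' x / g' x) -> strict_decr_on a b (H_fg f g f' g').
Proof.
  intros Hr x y Hx Hy Hxy; destruct (H_fg_sub x y Hx Hy Hxy) as [c [Hc Hdiff]].
  assert (Hc' : in_oi a b c) by (apply (in_oi_between a b x y); auto; lra).
  assert (0 < (f' c / g' c - f' y / g' y) * g y)
    by (apply Rmult_lt_0_compat; [apply Rlt_0_minus, Hr | apply g_pos]; auto; lra).
  assert (0 < (f' x / g' x - f' c / g' c) * g x)
    by (apply Rmult_lt_0_compat; [apply Rlt_0_minus, Hr | apply g_pos]; auto; lra).
  lra.
Qed.

Lemma derivable_pt_lim_div_H_fg x : in_oi a b x ->
  derivable_pt_lim (fun t => f t / g t) x (g' x * H_fg f g f' g' x / (g x)²).
Proof.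
  intros Hx; pose proof (g_pos x Hx); pose proof (g'_neq0 x Hx).
  replace (g' x * H_fg f g f' g' x / (g x)²) with ((f' x * g x - g' x * f x) / (g x)²)
    by (unfold H_fg, Rsqr; field; lra).
  apply derivable_pt_lim_div; auto; lra.
Qed.

Lemma quot_deriv_pos_iff x : in_oi a b x ->
  quot_deriv_pos f g x <-> 0 < g' x * H_fg f g f' g' x.
Proof.
  intros Hx; unfold quot_deriv_pos.
  rewrite (ex_derivable_pt_lim_iff _ _ _ (fun l => 0 < l) (derivable_pt_lim_div_H_fg x Hx)).
  assert (0 < / (g x)²) by (apply Rinv_0_lt_compat, Rlt_0_sqr; pose proof (g_pos x Hx); lra).
  unfold Rdiv; split; intros; nra.
Qed.

Lemma quot_deriv_neg_iff x : in_oi a b x ->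
  quot_deriv_neg f g x <-> g' x * H_fg f g f' g' x < 0.
Proof.
  intros Hx; unfold quot_deriv_neg.
  rewrite (ex_derivable_pt_lim_iff _ _ _ (fun l => l < 0) (derivable_pt_lim_div_H_fg x Hx)).
  assert (0 < / (g x)²) by (apply Rinv_0_lt_compat, Rlt_0_sqr; pose proof (g_pos x Hx); lra).
  unfold Rdiv; split; intros; nra.
Qed.
End QuotientDerivative.
Theorem mainTheorem2 (a b : ER) (f g f' g' : R -> R) (LA LB : ER) :
  ER_lt a b ->
  (forall x, in_oi a b x -> derivable_pt_lim f x (f' x)) ->
  (forall x, in_oi a b x -> derivable_pt_lim g x (g' x)) ->
  (forall x, in_oi a b x -> g' x <> 0) ->
  (forall x, in_oi a b x -> 0 < g x) ->
  (strict_incr_on a b (fun x => f' x / g' x) \/ strict_decr_on a b (fun x => f' x / g' x)) ->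
  lim_a_plus a b (H_fg f g f' g') LA ->
  lim_b_minus a b (H_fg f g f' g') LB ->
  (* (i) *)
  ((forall x, in_oi a b x -> 0 < g' x) ->
     ((forall x, in_oi a b x -> quot_deriv_pos f g x) <->
      (ER_le (Fin 0) LA /\ ER_le (Fin 0) LB))) /\
  ((forall x, in_oi a b x -> g' x < 0) ->
     ((forall x, in_oi a b x -> quot_deriv_neg f g x) <->
      (ER_le (Fin 0) LA /\ ER_le (Fin 0) LB))) /\
  (* (ii) *)
  ((forall x, in_oi a b x -> 0 < g' x) ->
     ((forall x, in_oi a b x -> quot_deriv_neg f g x) <->
      (ER_le LA (Fin 0) /\ ER_le LB (Fin 0)))) /\
  ((forall x, in_oi a b x -> g' x < 0) ->
     ((forall x, in_oi a b x -> quot_deriv_pos f g x) <->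
      (ER_le LA (Fin 0) /\ ER_le LB (Fin 0)))) /\
  (* (iii) *)
  ((strict_incr_on a b (fun x => f' x / g' x) -> ER_lt LA (Fin 0) -> ER_lt (Fin 0) LB ->
    ((forall x, in_oi a b x -> 0 < g' x) ->
      exists! x0, in_oi a b x0 /\
        (forall x, ER_lt a (Fin x) -> x < x0 -> quot_deriv_neg f g x) /\
        (forall x, x0 < x -> ER_lt (Fin x) b -> quot_deriv_pos f g x)) /\
    ((forall x, in_oi a b x -> g' x < 0) ->
      exists! x0, in_oi a b x0 /\
        (forall x, ER_lt a (Fin x) -> x < x0 -> quot_deriv_pos f g x) /\
        (forall x, x0 < x -> ER_lt (Fin x) b -> quot_deriv_neg f g x)))) /\
  (* (iv) *)
  ((strict_decr_on a b (fun x => f' x / g' x) -> ER_lt (Fin 0) LA -> ER_lt LB (Fin 0) ->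
    ((forall x, in_oi a b x -> 0 < g' x) ->
      exists! x0, in_oi a b x0 /\
        (forall x, ER_lt a (Fin x) -> x < x0 -> quot_deriv_pos f g x) /\
        (forall x, x0 < x -> ER_lt (Fin x) b -> quot_deriv_neg f g x)) /\
    ((forall x, in_oi a b x -> g' x < 0) ->
      exists! x0, in_oi a b x0 /\
        (forall x, ER_lt a (Fin x) -> x < x0 -> quot_deriv_neg f g x) /\
        (forall x, x0 < x -> ER_lt (Fin x) b -> quot_deriv_pos f g x)))).
Proof.
  intros Hab Hf Hg Hg'0 Hgp Hr HA HB.
  set (h := H_fg f g f' g') in *.
  assert (Hh : strict_incr_on a b h \/ strict_decr_on a b h).
  { destruct Hr; [left; apply H_fg_strict_incr | right; apply H_fg_strict_decr]; auto. }
  assert (Gpos : (forall x, in_oi a b x -> 0 < g' x) -> forall x, in_oi a b x ->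
            (quot_deriv_pos f g x <-> 0 < h x) /\ (quot_deriv_neg f g x <-> h x < 0)).
  { intros Hs x Hx; rewrite (quot_deriv_pos_iff a b f g f' g'), (quot_deriv_neg_iff a b f g f' g'); auto.
    fold h; specialize (Hs x Hx); split; split; intros; nra. }
  assert (Gneg : (forall x, in_oi a b x -> g' x < 0) -> forall x, in_oi a b x ->
            (quot_deriv_pos f g x <-> h x < 0) /\ (quot_deriv_neg f g x <-> 0 < h x)).
  { intros Hs x Hx; rewrite (quot_deriv_pos_iff a b f g f' g'), (quot_deriv_neg_iff a b f g f' g'); auto.
    fold h; specialize (Hs x Hx); split; split; intros; nra. }
  pose proof (strict_mono_pos_iff a b h LA LB Hab Hh HA HB) as Hpos.
  pose proof (strict_mono_neg_iff a b h LA LB Hab Hh HA HB) as Hneg.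
  split; [|split; [|split; [|split; [|split]]]].
  - intros Hs; rewrite <- Hpos; split; intros H x Hx; apply (Gpos Hs x Hx); auto.
  - intros Hs; rewrite <- Hpos; split; intros H x Hx; apply (Gneg Hs x Hx); auto.
  - intros Hs; rewrite <- Hneg; split; intros H x Hx; apply (Gpos Hs x Hx); auto.
  - intros Hs; rewrite <- Hneg; split; intros H x Hx; apply (Gneg Hs x Hx); auto.
  - intros Hr' HLA HLB.
    pose proof (strict_incr_sign_change a b h LA LB
                  (H_fg_strict_incr a b f g f' g' Hf Hg Hg'0 Hgp Hr') HA HB HLA HLB) as Hsc.
    split; intros Hs; refine (ex_unique_iff _ _ _ _ Hsc); intros x0;
      apply sign_change_at_iff; intros x Hx; symmetry; [apply Gpos | apply Gpos | apply Gneg | apply Gneg]; auto.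
  - intros Hr' HLA HLB.
    pose proof (strict_decr_sign_change a b h LA LB
                  (H_fg_strict_decr a b f g f' g' Hf Hg Hg'0 Hgp Hr') HA HB HLA HLB) as Hsc.
    split; intros Hs; refine (ex_unique_iff _ _ _ _ Hsc); intros x0;
      apply sign_change_at_iff; intros x Hx; symmetry; [apply Gpos | apply Gpos | apply Gneg | apply Gneg]; auto.
Qed.
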